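(* Let $X_1$ and $X_2$ be finite sets of quantifier-free first-order clauses, and let $\pi(X_1)$ be the set of prime implicates of $X_1$. If $C_1$ and $C_2$ are implicates of $\pi(X_1)\cup X_2$ and their consensus $CON(C_1,C_2)$ is defined, then $CON(C_1,C_2)$ is an implicate of $X_1\cup X_2$.
   Context: The setting is first-order logic without equality. A literal is an atom or a negated atom. A clause is a finite disjunction of literals, also viewed as a finite set of literals, and all its variables are implicitly universally quantified. A formula (knowledge base) is a finite conjunction, equivalently a finite set, of clauses. A clause is fundamental if it does not contain a literal together with its negation; all clauses considered are assumed fundamental. $\models$ denotes first-order logical consequence. Clause $C_1$ subsumes clause $C_2$ iff there is a substitution $\sigma$ with $C_1\sigma\subseteq C_2$. A clause $C$ is an implicate of a set of clauses $X$ if $X\sigma\models C$ for some substitution $\sigma$. A prime implicate of $X$ is an implicate of $X$ that is not subsumed by any other implicate of $X$. $\pi(X)$ denotes the set of prime implicates of $X$. Two literals $r,s$ are complementary if $\{r,\neg s\}$ is unifiable; its most general unifier $\sigma$ is the complementary substitution. For clauses $C_1\ni r$ and $C_2\ni s$ with $r,s$ complementary via mgu $\sigma$ (so $r\sigma=t$ and $s\sigma=\neg t$), the resolvent is $[(C_1-\{r\})\cup(C_2-\{s\})]\sigma=(C_1\sigma-\{t\})\cup(C_2\sigma-\{\neg t\})$. If this resolvent is fundamental it is called the consensus $CON(C_1,C_2)$, and it is said to be associated with $\sigma$. Each original clause of a set is associated with the empty substitution. If $C_1,C_2$ are associated with $\sigma_1,\sigma_2$, their consensus with respect to $\sigma$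 is defined only when $\sigma_1\sigma=\sigma_2\sigma$. In that case it is the propositional consensus of $C_1\sigma$ and $C_2\sigma$, and it is associated with $\sigma_1\sigma=\sigma_2\sigma$. *)

From Stdlib Require Import List.
Import ListNotations.

Inductive term : Type :=
| Var : nat -> term
| Fn : nat -> list term -> term.

(* A literal: polarity (true = positive atom), predicate symbol, arguments. *)
Record literal : Type := Lit { lpos : bool; lpred : nat; largs : list term }.

(* Clauses are finite sets of literals, represented by lists (read as sets
   via membership). *)
Definition clause := list literal.
Definition clause_set := clause -> Prop.

Definition negate (l : literal) : literal := Lit (negb (lpos l)) (lpred l) (largs l).

Definition subst := nat -> term.

Fixpoint tsubst (s : subst) (t : term) : term :=
  match t with
  | Var x => s x
  | Fn f ts => Fn f (map (tsubst s) ts)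
  end.

Definition lsubst (s : subst) (l : literal) : literal :=
  Lit (lpos l) (lpred l) (map (tsubst s) (largs l)).

Definition csubst (s : subst) (C : clause) : clause := map (lsubst s) C.

Definition set_subst (s : subst) (X : clause_set) : clause_set :=
  fun D => exists C, X C /\ D = csubst s C.

Definition set_of (X : list clause) : clause_set := fun C => In C X.
Definition set_union (X Y : clause_set) : clause_set := fun C => X C \/ Y C.

Record structure : Type := {
  dom : Type;
  dom_elt : dom;
  fn_int : nat -> list dom -> dom;
  pred_int : nat -> list dom -> Prop }.

Fixpoint teval (M : structure) (v : nat -> dom M) (t : term) : dom M :=
  match t with
  | Var x => v x
  | Fn f ts => fn_int M f (map (teval M v) ts)
  end.

Definition sat_lit (M : structure) (v : nat -> dom M) (l : literal) : Prop :=
  if lpos l then pred_int M (lpred l) (map (teval M v) (largs l))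
  else ~ pred_int M (lpred l) (map (teval M v) (largs l)).

Definition sat_clause (M : structure) (C : clause) : Prop :=
  forall v : nat -> dom M, exists l, In l C /\ sat_lit M v l.

Definition models (M : structure) (X : clause_set) : Prop :=
  forall C, X C -> sat_clause M C.

Definition entails (X : clause_set) (C : clause) : Prop :=
  forall M : structure, models M X -> sat_clause M C.

Definition fundamental (C : clause) : Prop :=
  ~ (exists l, In l C /\ In (negate l) C).

Definition subsumes (C1 C2 : clause) : Prop :=
  exists s : subst, forall l, In l (csubst s C1) -> In l C2.

Definition implicate (X : clause_set) (C : clause) : Prop :=
  fundamental C /\ exists s : subst, entails (set_subst s X) C.

(* Prime implicate: an implicate not subsumed by any other implicate,
   where "other" is read up to mutual subsumption (variants). *)
Definition prime_implicate (X : clause_set) (C : clause) : Prop :=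
  implicate X C /\
  forall C', implicate X C' -> subsumes C' C -> subsumes C C'.

Definition prime_implicates (X : clause_set) : clause_set := prime_implicate X.

Definition is_mgu (s : subst) (l1 l2 : literal) : Prop :=
  lsubst s l1 = lsubst s l2 /\
  forall th : subst, lsubst th l1 = lsubst th l2 ->
    exists eta : subst, forall x, th x = tsubst eta (s x).

(* consensus C1 C2 R : the consensus CON(C1,C2) is defined (for some choice of
   complementary literals r in C1, s in C2 with complementary substitution
   sigma) and equals R, as a set of literals. *)
Definition consensus (C1 C2 R : clause) : Prop :=
  exists (r s : literal) (sg : subst),
    In r C1 /\ In s C2 /\ is_mgu sg r (negate s) /\
    (forall l, In l R <->
       exists l0, ((In l0 C1 /\ l0 <> r) \/ (In l0 C2 /\ l0 <> s)) /\
                  l = lsubst sg l0) /\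
    fundamental R.

(* Every implicate of a clause set is true in every model of that set, and a
   prime implicate of X1 is in particular an implicate of X1. Hence every model
   of X1 and X2 satisfies pi(X1) and X2, all their instances, and therefore C1
   and C2. Resolution is sound: at any valuation, evaluate C1 and C2 under the
   valuation composed with the complementary substitution; the two resolved
   literals become complementary, so a true literal survives in the consensus. *)

From Stdlib Require Import List Classical.

Lemma teval_tsubst M v s : forall t,
  teval M v (tsubst s t) = teval M (fun x => teval M v (s x)) t.
Proof.
  fix IH 1. intros [x | f ts]; [reflexivity |]. simpl. f_equal. rewrite map_map.
  induction ts as [| t ts IHts]; simpl; [reflexivity |]. now rewrite IH, IHts.
Qed.

Lemma sat_lit_lsubst M v s l :
  sat_lit M v (lsubst s l) <-> sat_lit M (fun x => teval M v (s x)) l.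
Proof.
  unfold sat_lit, lsubst; simpl. rewrite map_map.
  rewrite (map_ext _ _ (teval_tsubst M v s)). tauto.
Qed.

Lemma sat_lit_negate M v l : sat_lit M v (negate l) -> ~ sat_lit M v l.
Proof. unfold sat_lit, negate; simpl. destruct (lpos l); simpl; auto. Qed.

Lemma lsubst_negate s l : lsubst s (negate l) = negate (lsubst s l).
Proof. reflexivity. Qed.

Lemma sat_clause_csubst M s C : sat_clause M C -> sat_clause M (csubst s C).
Proof.
  intros HC v. destruct (HC (fun x => teval M v (s x))) as [l [Hl Hsat]].
  exists (lsubst s l). split.
  - now apply in_map.
  - now apply sat_lit_lsubst.
Qed.

Lemma sat_clause_csubst_Var M C : sat_clause M (csubst Var C) -> sat_clause M C.
Proof.
  intros HC v. destruct (HC v) as [l [Hl Hsat]].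
  apply in_map_iff in Hl as [l0 [<- Hl0]].
  exists l0. split; [exact Hl0 |]. now apply sat_lit_lsubst in Hsat.
Qed.

Lemma models_set_subst M s X : models M X -> models M (set_subst s X).
Proof. intros HX D [C [HC ->]]. now apply sat_clause_csubst, HX. Qed.

Lemma models_set_subst_Var M X : models M (set_subst Var X) -> models M X.
Proof. intros HX C HC. apply sat_clause_csubst_Var, HX. now exists C. Qed.

Lemma implicate_sat M X C : models M X -> implicate X C -> sat_clause M C.
Proof. intros HX [_ [s Hs]]. now apply Hs, models_set_subst. Qed.

Lemma models_prime_implicates M X : models M X -> models M (prime_implicates X).
Proof. intros HX C [HC _]. exact (implicate_sat M X C HX HC). Qed.

Lemma models_set_of_app M X1 X2 :
  models M (set_of (X1 ++ X2)) -> models M (set_of X1) /\ models M (set_of X2).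
Proof. intros H; split; intros C HC; apply H, in_or_app; auto. Qed.

Lemma consensus_sat M C1 C2 R :
  sat_clause M C1 -> sat_clause M C2 -> consensus C1 C2 R -> sat_clause M R.
Proof.
  intros H1 H2 [r [s [sg [_ [_ [[Hunif _] [HR _]]]]]]] v.
  set (v' := fun x => teval M v (sg x)).
  assert (Hkeep : forall l0, ((In l0 C1 /\ l0 <> r) \/ (In l0 C2 /\ l0 <> s)) ->
            sat_lit M v' l0 -> exists l, In l R /\ sat_lit M v l).
  { intros l0 Hl0 Hsat. exists (lsubst sg l0). split.
    - apply HR. now exists l0.
    - now apply sat_lit_lsubst. }
  destruct (H1 v') as [l1 [Hl1 Hsat1]].
  destruct (classic (l1 = r)) as [-> | Hne1]; [| apply (Hkeep l1); auto].
  destruct (H2 v') as [l2 [Hl2 Hsat2]].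
  destruct (classic (l2 = s)) as [-> | Hne2]; [| apply (Hkeep l2); auto].
  exfalso. apply (sat_lit_negate M v (lsubst sg s)); [| now apply sat_lit_lsubst].
  rewrite <- lsubst_negate, <- Hunif. now apply sat_lit_lsubst.
Qed.

Theorem theorem1 (X1 X2 : list clause) (C1 C2 R : clause) :
  implicate (set_union (prime_implicates (set_of X1)) (set_of X2)) C1 ->
  implicate (set_union (prime_implicates (set_of X1)) (set_of X2)) C2 ->
  consensus C1 C2 R ->
  implicate (set_of (X1 ++ X2)) R.
Proof.
  intros HC1 HC2 Hcon.
  split; [now destruct Hcon as (_ & _ & _ & _ & _ & _ & _ & Hfund) |].
  exists Var. intros M HM.
  destruct (models_set_of_app M X1 X2 (models_set_subst_Var M _ HM)) as [HX1 HX2].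
  assert (HY : models M (set_union (prime_implicates (set_of X1)) (set_of X2))).
  { intros C [HC | HC]; [exact (models_prime_implicates M _ HX1 C HC) | exact (HX2 C HC)]. }
  exact (consensus_sat M C1 C2 R (implicate_sat M _ C1 HY HC1)
           (implicate_sat M _ C2 HY HC2) Hcon).
Qed.
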